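(* Let $m\geq 2$ be an integer, let $(\alpha_i)_{1\leq i\leq m}\in\left]0,1\right[^m$, and define $$\phi(\alpha_1,\ldots,\alpha_m)=\dfrac{1}{1+\dfrac{1}{\sum_{i=1}^m\dfrac{\alpha_i}{1-\alpha_i}}}.$$ Let $(\sigma_j)_{1\leq j\leq m}$ be the elementary symmetric polynomials in $(\alpha_i)_{1\leq i\leq m}$, i.e., $\sigma_j=\sum_{1\leq i_1<\cdots<i_j\leq m}\prod_{l=1}^j\alpha_{i_l}$ for every $j\in\{1,\ldots,m\}$. Then: (i) $\phi(\alpha_1,\ldots,\alpha_m)=\Big[\sum_{l=1}^{+\infty}\sum_{i=1}^{m}\alpha_{i}^{l}\Big]\Big/\Big[1+\sum_{l=1}^{+\infty}\sum_{i=1}^{m}\alpha_{i}^{l}\Big]$; (ii) $\phi(\alpha_1,\ldots,\alpha_m)=\Big[\sum_{j=1}^m(-1)^{j-1}j\sigma_j\Big]\Big/\Big[1+\sum_{j=2}^{m}(-1)^{j-1}(j-1)\sigma_j\Big]$; (iii) $\phi(\alpha_1,\ldots,\alpha_m)>\max_{1\leq i\leq m}\alpha_i$. *)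

From HB Require Import structures.
From mathcomp Require Import all_boot all_order all_algebra.
From mathcomp Require Import all_classical all_reals all_analysis.
Set Implicit Arguments. Unset Strict Implicit. Unset Printing Implicit Defensive.
Import Order.TTheory GRing.Theory Num.Theory.
Local Open Scope ring_scope.

Definition phi (R : realType) (m : nat) (a : 'I_m -> R) : R :=
  1 / (1 + 1 / (\sum_(i < m) a i / (1 - a i))).

Definition elsym (R : realType) (m : nat) (a : 'I_m -> R) (j : nat) : R :=
  \sum_(I : {set 'I_m} | #|I| == j) \prod_(i in I) a i.

Definition powsum (R : realType) (m : nat) (a : 'I_m -> R) (l : nat) : R :=
  \sum_(i < m) a i ^+ l.

From HB Require Import structures.
From mathcomp Require Import all_boot all_order all_algebra.
From mathcomp Require Import all_classical all_reals all_analysis.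
From mathcomp Require Import ring lra.
Set Implicit Arguments. Unset Strict Implicit. Unset Printing Implicit Defensive.
Import Order.TTheory GRing.Theory Num.Theory.
Local Open Scope ring_scope.

(* Write t_i = a_i / (1 - a_i) and S = sum_i t_i, so that phi = S / (1 + S).
   (i) Each a_i^l summed over l >= 1 is a geometric series with value t_i.
   (ii) Multiplying numerator and denominator of S / (1 + S) by
   P = prod_i (1 - a_i) gives N / (N + P) with N = sum_i a_i prod_(k <> i) (1 - a_k);
   expanding both products over subsets of indices yields the alternating sums
   of elementary symmetric polynomials.
   (iii) x |-> x / (1 + x) is increasing and sends t_i to a_i, while S > t_i
   as soon as there are two indices. *)

Definition odds_sum (R : realType) (m : nat) (a : 'I_m -> R) :=
  \sum_(i < m) a i / (1 - a i).

Lemma prodrD_subsets (R : comPzRingType) (m : nat) (F G : 'I_m -> R) :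
  \prod_i (F i + G i) =
  \sum_(J : {set 'I_m}) (\prod_(i in J) F i) * \prod_(i in ~: J) G i.
Proof.
rewrite bigA_distr; apply: eq_bigr => J _.
rewrite (bigID (mem J)) /=; congr (_ * _); first by apply: eq_bigr => i ->.
rewrite [in RHS](eq_bigl (fun i => i \notin J)); last by move=> i; rewrite inE.
by apply: eq_bigr => i /negbTE ->.
Qed.

Lemma prod1Br_subsets (R : comPzRingType) (m : nat) (a : 'I_m -> R) :
  \prod_i (1 - a i) = \sum_(J : {set 'I_m}) (-1) ^+ #|J| * \prod_(i in J) a i.
Proof.
under eq_bigr do rewrite addrC.
rewrite prodrD_subsets; apply: eq_bigr => J _.
by rewrite prodrN big1_eq mulr1.
Qed.

Lemma mulr_prod1Br_neq_subsets (R : comPzRingType) (m : nat) (a : 'I_m -> R)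
    (i : 'I_m) :
  a i * \prod_(k | k != i) (1 - a k) =
  \sum_(J : {set 'I_m} | i \in J) (-1) ^+ (#|J| - 1) * \prod_(k in J) a k.
Proof.
have -> : a i * \prod_(k | k != i) (1 - a k) =
    \prod_k ((if k == i then a k else - a k) + (if k == i then 0 else 1)).
  rewrite [in RHS](bigD1 i) //= eqxx addr0; congr (_ * _).
  by apply: eq_bigr => k /negbTE ->; rewrite addrC.
rewrite prodrD_subsets [RHS]big_mkcond /=; apply: eq_bigr => J _.
case: ifPn => iJ; last first.
  have iJc : i \in ~: J by rewrite inE.
  by rewrite [X in _ * X](big_setD1 i iJc) /= eqxx mul0r mulr0.
rewrite [X in _ * X]big1 ?mulr1; last first.
  by move=> k; rewrite inE; case: eqP => // ->; rewrite iJ.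
rewrite (big_setD1 i iJ) [in RHS](big_setD1 i iJ) /= eqxx.
rewrite (cardsD1 i J) iJ add1n subn1 /= mulrCA -prodrN.
congr (_ * _); apply: eq_bigr => k.
by rewrite in_setD1 => /andP[/negbTE -> _].
Qed.

Lemma sumr_nat_zero_prefix (R : nmodType) (k n : nat) (f : nat -> R) :
  (forall j, (j < k)%N -> f j = 0) ->
  \sum_(k <= j < n) f j = \sum_(0 <= j < n) f j.
Proof.
move=> f0; have [kn | nk] := leqP k n.
  rewrite [RHS](big_cat_nat (leq0n k) kn) /= [X in _ = X + _]big1_seq ?add0r //.
  by move=> j; rewrite mem_index_iota => /f0.
rewrite big_geq ?(ltnW nk) // big1_seq // => j.
by rewrite mem_index_iota => /andP[_ /ltn_trans/(_ nk)/f0].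
Qed.

Lemma sum_elsym (R : realType) (m : nat) (a : 'I_m -> R) (c : nat -> R) :
  \sum_(j < m.+1) c j * elsym a j =
  \sum_(J : {set 'I_m}) c #|J| * \prod_(i in J) a i.
Proof.
rewrite /elsym; under eq_bigr do rewrite mulr_sumr.
rewrite (exchange_big_dep xpredT) //=; apply: eq_bigr => J _.
have ltJm : (#|J| < m.+1)%N by rewrite ltnS -[m in (_ <= m)%N]card_ord max_card.
rewrite (big_pred1 (inord #|J|)) ?inordK // => j.
by rewrite /= -val_eqE /= inordK // eq_sym.
Qed.

Section ElsymIdentities.
Variables (R : realType) (m : nat) (a : 'I_m -> R).

Lemma alternating_elsym_numer :
  \sum_(1 <= j < m.+1) (-1) ^+ (j - 1) * j%:R * elsym a j =
  \sum_i a i * \prod_(k | k != i) (1 - a k).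
Proof.
rewrite sumr_nat_zero_prefix => [|[] // _]; last by rewrite mulr0 mul0r.
rewrite big_mkord (sum_elsym a (fun j => (-1) ^+ (j - 1) * j%:R)).
under [RHS]eq_bigr do rewrite mulr_prod1Br_neq_subsets.
rewrite (exchange_big_dep xpredT) //=; apply: eq_bigr => J _.
by rewrite sumr_const -[RHS]mulr_natr mulrAC.
Qed.

Lemma alternating_elsym_denom :
  1 + \sum_(2 <= j < m.+1) (-1) ^+ (j - 1) * (j - 1)%:R * elsym a j =
  \sum_i a i * \prod_(k | k != i) (1 - a k) + \prod_i (1 - a i).
Proof.
rewrite sumr_nat_zero_prefix => [|j j_lt2]; last first.
  have -> : (j - 1 = 0)%N by case: j j_lt2 => [|[]].
  by rewrite mulr0 mul0r.
rewrite -alternating_elsym_numer.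
rewrite [X in _ = X + _]sumr_nat_zero_prefix => [|[] // _]; last first.
  by rewrite mulr0 mul0r.
rewrite !big_mkord (sum_elsym a (fun j => (-1) ^+ (j - 1) * (j - 1)%:R)).
rewrite (sum_elsym a (fun j => (-1) ^+ (j - 1) * j%:R)).
rewrite prod1Br_subsets -big_split /=.
rewrite (bigD1 finset.set0) // [in RHS](bigD1 finset.set0) //=.
rewrite !cards0 !big_set0 /=.
rewrite addrA; congr (_ + _); first by rewrite sub0n; ring.
apply: eq_bigr => J nJ0; case cJ: #|J| => [|k].
  by move/eqP: cJ; rewrite cards_eq0 (negbTE nJ0).
by rewrite subn1 /= exprS; ring.
Qed.

End ElsymIdentities.

Lemma phi_odds_sum (R : realType) (m : nat) (a : 'I_m -> R) :
  0 < odds_sum a -> phi a = odds_sum a / (1 + odds_sum a).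
Proof.
rewrite /phi -/(odds_sum a) => S_gt0.
have S1_gt0 : 0 < 1 + odds_sum a by rewrite addr_gt0.
by field; rewrite !gt_eqF.
Qed.

Lemma odds_sum_mul_prod (R : realType) (m : nat) (a : 'I_m -> R) :
  (forall i, a i != 1) ->
  odds_sum a * \prod_i (1 - a i) = \sum_i a i * \prod_(k | k != i) (1 - a k).
Proof.
move=> a_neq1; rewrite mulr_suml; apply: eq_bigr => i _.
by rewrite (bigD1 i) //= mulrA divfK // subr_eq0 eq_sym.
Qed.

Lemma cvg_sum_powsum (R : realType) (m : nat) (a : 'I_m -> R) :
  (forall i, `|a i| < 1) ->
  ((fun n => \sum_(1 <= l < n) powsum a l) @ \oo --> odds_sum a)%classic.
Proof.
move=> a_lt1; rewrite -cvg_shiftS /=.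
have -> : (fun n => \sum_(1 <= l < n.+1) powsum a l) =
    (fun n => \sum_i series (geometric (a i) (a i)) n).
  apply: funext; elim=> [|n IHn].
    by rewrite big_geq // big1 // => i _; rewrite /series /= big_geq.
  rewrite big_nat_recr //= IHn -big_split /=; apply: eq_bigr => i _.
  by rewrite /series /= big_nat_recr //= exprS.
apply: (cvg_big add_continuous) => i _; exact: cvg_geometric_series.
Qed.

Section UnitInterval.
Variables (R : realType) (m : nat) (a : 'I_m -> R).
Hypothesis a_in01 : forall i, 0 < a i < 1.

Lemma odds_gt0 i : 0 < a i / (1 - a i).
Proof. by have /andP[a_gt0 a_lt1] := a_in01 i; rewrite divr_gt0 ?subr_gt0. Qed.

Lemma odds_sum_gt_odds i j : j != i -> a i / (1 - a i) < odds_sum a.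
Proof.
move=> ji; rewrite /odds_sum (bigD1 i) //= ltrDl (bigD1 j) //=.
rewrite ltr_pwDl ?odds_gt0 // sumr_ge0 // => k _; exact/ltW/odds_gt0.
Qed.

Lemma odds_sum_gt0 : (0 < m)%N -> 0 < odds_sum a.
Proof.
move=> m_gt0; rewrite /odds_sum (bigD1 (Ordinal m_gt0)) //=.
rewrite ltr_pwDl ?odds_gt0 // sumr_ge0 // => k _; exact/ltW/odds_gt0.
Qed.

Lemma lt_phi (i : 'I_m) : (2 <= m)%N -> a i < phi a.
Proof.
move=> m_ge2; have m_gt0 : (0 < m)%N := ltnW m_ge2.
have [j ji] : exists j : 'I_m, j != i.
  have [->|i_neq0] := eqVneq i (Ordinal m_gt0).
    by exists (Ordinal m_ge2); rewrite -val_eqE.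
  by exists (Ordinal m_gt0); rewrite eq_sym.
have S_gt0 := odds_sum_gt0 m_gt0; have /andP[a_gt0 a_lt1] := a_in01 i.
have := odds_sum_gt_odds ji; rewrite ltr_pdivrMr ?subr_gt0 // => ltS.
rewrite phi_odds_sum // ltr_pdivlMr ?addr_gt0 //; nra.
Qed.

Lemma phi_alternating_elsym : (0 < m)%N ->
  phi a = (\sum_(1 <= j < m.+1) (-1) ^+ (j - 1) * j%:R * elsym a j)
          / (1 + \sum_(2 <= j < m.+1) (-1) ^+ (j - 1) * (j - 1)%:R * elsym a j).
Proof.
move=> m_gt0; have S_gt0 := odds_sum_gt0 m_gt0.
have P_gt0 : 0 < \prod_i (1 - a i).
  by apply: prodr_gt0 => i _; have /andP[_] := a_in01 i; rewrite subr_gt0.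
rewrite alternating_elsym_numer alternating_elsym_denom -odds_sum_mul_prod.
  have den_gt0 : 0 < odds_sum a * \prod_i (1 - a i) + \prod_i (1 - a i).
    by rewrite addr_gt0 // mulr_gt0.
  have S1_gt0 : 0 < 1 + odds_sum a by rewrite addr_gt0.
  by rewrite phi_odds_sum //; field; rewrite !gt_eqF.
by move=> i; have /andP[_ a_lt1] := a_in01 i; rewrite lt_eqF.
Qed.

End UnitInterval.

Theorem proposition2p6 (R : realType) (m : nat) (hm : (2 <= m)%N)
  (a : 'I_m -> R) (ha : forall i, 0 < a i < 1) :
  [/\ cvgn (fun n => \sum_(1 <= l < n) powsum a l)
      /\ phi a = (\big[+%R/0]_(1 <= l <oo) powsum a l)
                 / (1 + \big[+%R/0]_(1 <= l <oo) powsum a l),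
      phi a = (\sum_(1 <= j < m.+1) (-1) ^+ (j - 1) * j%:R * elsym a j)
              / (1 + \sum_(2 <= j < m.+1) (-1) ^+ (j - 1) * (j - 1)%:R * elsym a j)
    & \big[Num.max/0]_(i < m) a i < phi a].
Proof.
have m_gt0 : (0 < m)%N := ltnW hm.
have S_gt0 : 0 < odds_sum a := odds_sum_gt0 ha m_gt0.
have cvgS : ((fun n => \sum_(1 <= l < n) powsum a l) @ \oo --> odds_sum a)%classic.
  apply: cvg_sum_powsum => i; have /andP[a_gt0 a_lt1] := ha i.
  by rewrite gtr0_norm.
split.
- by split; [exact: cvgP cvgS | rewrite (cvg_lim _ cvgS) // phi_odds_sum].
- exact: phi_alternating_elsym.
- apply: bigmax_lt => [|i _]; last exact: lt_phi.
  by rewrite phi_odds_sum // divr_gt0 // addr_gt0.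
Qed.
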